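(* Let $\Gamma=(V,E)$ be a directed graph (finite or infinite) in which every vertex has outdegree at most $M<\infty$ and at least one outgoing edge, and let $q>1$. Then there exists a unique vector $\overline{t}=(t_v)_{v\in V}\in[1,M^{1/(q-1)}]^V$ such that $$t_v^q = \sum_{w:\ vw\in E} t_w\qquad\text{for all } v\in V.$$
   Context: $vw\in E$ denotes a directed edge from $v$ to $w$. *)

From Stdlib Require Import Reals List.
Open Scope R_scope.

Definition out_list {V : Type} (E : V -> V -> Prop) (v : V) (l : list V) : Prop :=
  NoDup l /\ forall w, In w l <-> E v w.

Definition sumL {V : Type} (t : V -> R) (l : list V) : R :=
  fold_right Rplus 0 (map t l).

(** Proof idea: the map [x |-> (v |-> (sum_{vw in E} x_w)^(1/q))] is monotone
    and maps the box [[1, K]^V], [K = M^(1/(q-1))], into itself, because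
    [K^q = M K] bounds every out-sum by [K^q].  As in the Knaster-Tarski
    theorem, the pointwise supremum of all sub-solutions in the box is a fixed
    point.  For uniqueness, if [a] and [b] are solutions and [c = sup a/b], then
    [a_v^q <= c b_v^q], so [c <= c^(1/q)], which forces [c <= 1] since [q > 1];
    by symmetry [a = b]. *)

From Stdlib Require Import Reals List Permutation Lra.
From Stdlib Require Import ClassicalEpsilon FunctionalExtensionality.
Open Scope R_scope.

Lemma Rpower_gt_0 a p : 0 < Rpower a p.
Proof. apply exp_pos. Qed.

Lemma Rpower_1_l p : Rpower 1 p = 1.
Proof. unfold Rpower. rewrite ln_1, Rmult_0_r. apply exp_0. Qed.

Lemma Rpower_root_pow y q : 0 < y -> 0 < q -> Rpower (Rpower y (1 / q)) q = y.
Proof.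
  intros Hy Hq. rewrite Rpower_mult.
  replace (1 / q * q) with 1 by (field; lra). now apply Rpower_1.
Qed.

Lemma Rpower_le_reg_l a b q :
  0 < a -> 0 < b -> 0 < q -> Rpower a q <= Rpower b q -> a <= b.
Proof.
  intros Ha Hb Hq H. destruct (Rle_or_lt a b) as [|Hlt]; [assumption|].
  pose proof (Rlt_Rpower_l b a q Hq (conj Hb Hlt)). lra.
Qed.

Lemma Rpower_root_le_1 c q : 1 < q -> c <= Rpower c (1 / q) -> c <= 1.
Proof.
  intros Hq Hc. destruct (Rle_or_lt c 1) as [|Hgt]; [assumption|].
  assert (Hlt : Rpower c (1 / q) < Rpower c 1).
  { apply Rpower_lt; [lra|]. apply Rmult_lt_reg_r with q; [lra|].
    field_simplify; lra. }
  rewrite Rpower_1 in Hlt; lra.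
Qed.

Lemma Rpower_root_pred_pow M q :
  0 < M -> 1 < q -> Rpower (Rpower M (1 / (q - 1))) q = M * Rpower M (1 / (q - 1)).
Proof.
  intros HM Hq. set (K := Rpower M (1 / (q - 1))).
  replace q with ((q - 1) + 1) at 1 by ring.
  rewrite Rpower_plus, Rpower_1 by apply Rpower_gt_0.
  unfold K. now rewrite Rpower_root_pow by lra.
Qed.

Section SumL.
Variable V : Type.
Implicit Types (f g : V -> R) (l : list V).

Lemma sumL_le f g l : (forall w, In w l -> f w <= g w) -> sumL f l <= sumL g l.
Proof.
  induction l as [|a l IH]; intros H; unfold sumL; simpl; [lra|].
  apply Rplus_le_compat; [apply H; left; reflexivity|].
  apply IH. intros w Hw. apply H. now right.
Qed.

Lemma sumL_scal f c l : sumL (fun w => c * f w) l = c * sumL f l.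
Proof. induction l as [|a l IH]; unfold sumL in *; simpl; [ring|]. rewrite IH; ring. Qed.

Lemma sumL_Permutation f l l' : Permutation l l' -> sumL f l = sumL f l'.
Proof. induction 1; unfold sumL in *; simpl; lra. Qed.

Lemma sumL_le_length f K l : (forall w, f w <= K) -> sumL f l <= INR (length l) * K.
Proof.
  intros H. induction l as [|a l IH]; unfold sumL in *; simpl length; [simpl; lra|].
  rewrite S_INR. simpl. specialize (H a). lra.
Qed.

Lemma sumL_ge_1 f l : l <> nil -> (forall w, 1 <= f w) -> 1 <= sumL f l.
Proof.
  intros Hl H. destruct l as [|a l]; [congruence|]. unfold sumL; simpl. fold (sumL f l).
  assert (0 <= sumL f l).
  { rewrite <- (Rmult_0_l (sumL f l)), <- sumL_scal.
    apply sumL_le. intros w _. specialize (H w). lra. }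
  specialize (H a). lra.
Qed.

End SumL.

Lemma sumL_out_list (V : Type) (E : V -> V -> Prop) (f : V -> R) v l l' :
  out_list E v l -> out_list E v l' -> sumL f l = sumL f l'.
Proof.
  intros [Hnd Hin] [Hnd' Hin']. apply sumL_Permutation, NoDup_Permutation; [assumption..|].
  intro w. now rewrite Hin, Hin'.
Qed.

Definition in_box {V : Type} (lo hi : R) (x : V -> R) : Prop :=
  forall v, lo <= x v <= hi.

Lemma monotone_box_fixpoint (V : Type) (lo hi : R) (F : (V -> R) -> V -> R) :
  in_box lo hi (fun _ : V => lo) ->
  (forall x y, in_box lo hi x -> in_box lo hi y ->
     (forall v, x v <= y v) -> forall v, F x v <= F y v) ->
  (forall x, in_box lo hi x -> in_box lo hi (F x)) ->
  exists t, in_box lo hi t /\ forall v, F t v = t v.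
Proof.
  intros Hlo Hmono Hbox.
  set (sub := fun x => in_box lo hi x /\ forall v, x v <= F x v).
  assert (Hsub_lo : sub (fun _ => lo)) by (split; [|intro v; apply Hbox]; assumption).
  assert (Hsup : forall v, {m | is_lub (fun r => exists x, sub x /\ x v = r) m}).
  { intro v. apply completeness.
    - exists hi. intros r [x [[Hx _] <-]]. apply Hx.
    - exists lo, (fun _ => lo). now split. }
  set (t := fun v => proj1_sig (Hsup v)).
  assert (Hub : forall x v, sub x -> x v <= t v).
  { intros x v Hx. apply (proj1 (proj2_sig (Hsup v))). now exists x. }
  assert (Hleast : forall v b, (forall x, sub x -> x v <= b) -> t v <= b).
  { intros v b Hb. apply (proj2 (proj2_sig (Hsup v))). intros r [x [Hx <-]]. now apply Hb. }
  assert (Ht : in_box lo hi t).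
  { intro v. split; [apply (Hub _ _ Hsub_lo)|]. apply Hleast. intros x [Hx _]. apply Hx. }
  assert (Ht_sub : forall v, t v <= F t v).
  { intro v. apply Hleast. intros x [Hx Hx_sub].
    apply (Rle_trans _ _ _ (Hx_sub v)). apply Hmono; [assumption..|].
    intro w. apply Hub. now split. }
  assert (HFt_sub : sub (F t)).
  { split; [now apply Hbox|]. apply Hmono; [assumption|now apply Hbox|assumption]. }
  exists t. split; [assumption|]. intro v.
  apply Rle_antisym; [now apply Hub|apply Ht_sub].
Qed.

Section Uniqueness.
Variables (V : Type) (L : V -> list V) (q : R).
Hypothesis hq : 1 < q.

Definition solution (x : V -> R) : Prop := forall v, Rpower (x v) q = sumL x (L v).

Lemma solution_scale (a b : V -> R) c :
  (forall v, 0 < a v) -> (forall v, 0 < b v) -> 0 < c ->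
  solution a -> solution b -> (forall v, a v <= c * b v) ->
  forall v, a v <= Rpower c (1 / q) * b v.
Proof.
  intros Ha Hb Hc Hsa Hsb Hab v.
  assert (Hcb : 0 < c * b v) by (apply Rmult_lt_0_compat; auto).
  apply (Rpower_le_reg_l _ _ q); [auto|apply Rmult_lt_0_compat; [apply Rpower_gt_0|auto]|lra|].
  rewrite <- Rpower_mult_distr, Rpower_root_pow by (auto; lra || apply Rpower_gt_0).
  rewrite Hsa, Hsb, <- sumL_scal. apply sumL_le. auto.
Qed.

Lemma solution_le (lo hi : R) (a b : V -> R) :
  0 < lo -> in_box lo hi a -> in_box lo hi b -> solution a -> solution b ->
  forall v, a v <= b v.
Proof.
  intros Hlo Ha Hb Hsa Hsb v0.
  assert (Ha0 : forall v, 0 < a v) by (intro v; specialize (Ha v); lra).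
  assert (Hb0 : forall v, 0 < b v) by (intro v; specialize (Hb v); lra).
  assert (Hratio : forall v, a v <= a v / b v * b v)
    by (intro v; right; field; specialize (Hb0 v); lra).
  destruct (completeness (fun r => exists v, a v / b v = r)) as [c [Hc_ub Hc_least]].
  { exists (hi / lo). intros r [v <-]. specialize (Ha v); specialize (Hb v).
    apply Rmult_le_reg_r with (b v * lo); [nra|]. field_simplify; nra. }
  { now exists (a v0 / b v0), v0. }
  assert (Hac : forall v, a v <= c * b v).
  { intro v. apply (Rle_trans _ _ _ (Hratio v)). apply Rmult_le_compat_r; [specialize (Hb0 v); lra|].
    apply Hc_ub. now exists v. }
  assert (Hc : 0 < c).
  { apply Rlt_le_trans with (a v0 / b v0); [now apply Rdiv_lt_0_compat|]. apply Hc_ub. now exists v0. }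
  assert (Hc1 : c <= 1).
  { apply (Rpower_root_le_1 c q hq), Hc_least. intros r [v <-].
    pose proof (solution_scale a b c Ha0 Hb0 Hc Hsa Hsb Hac v). specialize (Hb0 v).
    apply Rmult_le_reg_r with (b v); [lra|]. field_simplify; lra. }
  specialize (Hac v0). specialize (Hb0 v0). nra.
Qed.

End Uniqueness.

Arguments solution {V} L q x.

Section Existence.
Variables (V : Type) (L : V -> list V) (M q : R).
Hypotheses (hq : 1 < q) (L_deg : forall v, INR (length (L v)) <= M)
  (L_nonnil : forall v, L v <> nil).

Let K := Rpower M (1 / (q - 1)).

Definition root_step (x : V -> R) (v : V) : R := Rpower (sumL x (L v)) (1 / q).

Lemma degree_bound_ge_1 (v : V) : 1 <= M.
Proof.
  pose proof (L_deg v) as Hv. pose proof (L_nonnil v) as Hne.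
  destruct (L v) as [|w l]; [congruence|].
  simpl length in Hv. rewrite S_INR in Hv. pose proof (pos_INR (length l)). lra.
Qed.

Lemma root_step_box x : in_box 1 K x -> in_box 1 K (root_step x).
Proof.
  intros Hx v. pose proof (degree_bound_ge_1 v) as HM.
  assert (Hs : 1 <= sumL x (L v)) by (apply sumL_ge_1; [apply L_nonnil|intro w; apply Hx]).
  split.
  - rewrite <- (Rpower_1_l (1 / q)). apply Rle_Rpower_l; [|lra].
    apply Rlt_le, Rdiv_lt_0_compat; lra.
  - apply Rle_trans with (Rpower (Rpower K q) (1 / q)).
    + apply Rle_Rpower_l; [apply Rlt_le, Rdiv_lt_0_compat; lra|]. split; [lra|].
      unfold K. rewrite Rpower_root_pred_pow by lra. fold K.
      apply (Rle_trans _ _ _ (sumL_le_length _ _ K _ (fun w => proj2 (Hx w)))).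
      apply Rmult_le_compat_r; [pose proof (Hx v); lra|apply L_deg].
    + rewrite Rpower_mult. replace (q * (1 / q)) with 1 by (field; lra).
      rewrite Rpower_1; [lra|apply Rpower_gt_0].
Qed.

Lemma root_step_monotone x y : in_box 1 K x ->
  (forall v, x v <= y v) -> forall v, root_step x v <= root_step y v.
Proof.
  intros Hx Hxy v. apply Rle_Rpower_l; [apply Rlt_le, Rdiv_lt_0_compat; lra|]. split.
  - apply Rlt_le_trans with 1; [lra|]. apply sumL_ge_1; [apply L_nonnil|intro w; apply Hx].
  - apply sumL_le. auto.
Qed.

Lemma box_solution_exists : exists t, in_box 1 K t /\ solution L q t.
Proof.
  destruct (monotone_box_fixpoint V 1 K root_step) as [t [Ht Hfix]].
  - intro v. pose proof (degree_bound_ge_1 v). split; [lra|].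
    rewrite <- (Rpower_1_l (1 / (q - 1))). apply Rle_Rpower_l; [|lra].
    apply Rlt_le, Rdiv_lt_0_compat; lra.
  - intros x y Hx _. now apply root_step_monotone.
  - exact root_step_box.
  - exists t. split; [assumption|]. intro v. rewrite <- Hfix. unfold root_step.
    apply Rpower_root_pow; [|lra]. pose proof (Ht v).
    apply Rlt_le_trans with 1; [lra|]. apply sumL_ge_1; [apply L_nonnil|intro w; apply Ht].
Qed.

End Existence.

Theorem lemma2p1 (V : Type) (E : V -> V -> Prop) (M q : R)
  (hdeg : forall v : V, exists l : list V,
      out_list E v l /\ INR (length l) <= M /\ l <> nil)
  (hq : 1 < q) :
  exists! t : V -> R,
    (forall v, 1 <= t v <= Rpower M (1 / (q - 1))) /\
    (forall v l, out_list E v l -> Rpower (t v) q = sumL t l).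
Proof.
  set (L := fun v => proj1_sig (constructive_indefinite_description _ (hdeg v))).
  assert (HL : forall v, out_list E v (L v) /\ INR (length (L v)) <= M /\ L v <> nil)
    by (intro v; exact (proj2_sig (constructive_indefinite_description _ (hdeg v)))).
  assert (Hsol : forall t : V -> R,
             solution L q t <-> forall v l, out_list E v l -> Rpower (t v) q = sumL t l).
  { intro t. split.
    - intros Ht v l Hl. rewrite Ht. apply (sumL_out_list V E t v); [apply HL|exact Hl].
    - intros Ht v. apply Ht, HL. }
  destruct (box_solution_exists V L M q hq (fun v => proj1 (proj2 (HL v)))
              (fun v => proj2 (proj2 (HL v)))) as [t [Ht_box Ht_sol]].
  exists t. split; [split; [exact Ht_box|now apply Hsol]|].
  intros s [Hs_box Hs_sol%Hsol].
  apply functional_extensionality. intro v.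
  apply Rle_antisym; apply (solution_le V L q hq 1 (Rpower M (1 / (q - 1)))); auto; lra.
Qed.
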